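(* Let $X$ be a Fréchet sequence space over $\mathbb{Z}$ in which the unit sequences $(e_n)_{n\in\mathbb{Z}}$ form an unconditional basis. Let $w=(w_n)_{n\in\mathbb{Z}}$ be a sequence of non-zero scalars such that the bilateral weighted backward shift $B_w$, $B_w(x_n)_{n\in\mathbb{Z}}=(w_{n+1}x_{n+1})_{n\in\mathbb{Z}}$, is a (continuous linear) operator on $X$. If there exist $x\in X$ and a non-zero $y\in X$ such that $y$ is a limit point of the orbit $\{B_w^n x: n\geq 0\}$ (i.e. every neighbourhood of $y$ contains $B_w^n x$ for infinitely many $n\geq 0$), then $B_w$ is hypercyclic.
   Context: A Fréchet sequence space over $\mathbb{Z}$ is a Fréchet space that is a linear subspace of the space $\mathbb{K}^{\mathbb{Z}}$ of all real or complex sequences indexed by $\mathbb{Z}$, such that each coordinate functional $x=(x_n)_{n\in\mathbb{Z}}\mapsto x_k$ is continuous; $e_n=(\delta_{n,k})_{k\in\mathbb{Z}}$. An operator $T$ on $X$ is hypercyclic if there is $x\in X$ whose orbit $\{T^nx : n\geq 0\}$ is dense in $X$. *)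

From HB Require Import structures.
From mathcomp Require Import all_boot all_order all_algebra.
From mathcomp Require Import all_classical all_reals all_analysis.
From mathcomp Require Import finmap.
From mathcomp.real_closed Require complex.

Set Implicit Arguments.
Unset Strict Implicit.
Unset Printing Implicit Defensive.

Import Order.TTheory GRing.Theory Num.Theory.
Local Open Scope classical_set_scope.
Local Open Scope ring_scope.

(* A Fréchet space: a locally convex topological vector space (mathcomp's
   [tvsType], which is locally convex by definition) whose topology is induced
   by a complete translation-invariant metric [d]. *)
Definition frechet (R : realType) (K : numFieldType) (X : tvsType K) : Prop :=
  exists d : X -> X -> R,
    [/\
        [/\ (forall x y, 0 <= d x y),
             (forall x y, d x y = 0 <-> x = y),
             (forall x y, d x y = d y x),
             (forall x y z, d x z <= d x y + d y z) &
             (forall x y z, d (x + z) (y + z) = d x y)],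
        (forall (x : X) (U : set X),
           nbhs x U <-> exists2 e : R, 0 < e & [set y | d x y < e] `<=` U) &
        (forall u : nat -> X,
           (forall e : R, 0 < e -> exists N, forall m n, (N <= m)%N -> (N <= n)%N ->
              d (u m) (u n) < e) ->
           exists l : X, forall e : R, 0 < e -> exists N, forall n, (N <= n)%N ->
              d (u n) l < e)].

(* X is a Fréchet sequence space over Z: X is a Fréchet space identified with a
   linear subspace of K^Z through the (linear) coordinate map
   x |-> (coord n x)_{n in Z}, which is injective, and every coordinate
   functional is continuous. *)
Definition frechet_sequence_space (R : realType) (K : numFieldType)
    (X : tvsType K) (coord : int -> {linear X -> K^o}) : Prop :=
  [/\ frechet R X,
      (forall x y : X, (forall n, coord n x = coord n y) -> x = y) &
      (forall n, continuous (coord n))].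

(* The unit sequences e_n (elements of X with coord m (e n) = delta_{m,n})
   form an unconditional basis: for every x, the series sum_n x_n e_n
   converges unconditionally to x, i.e. the net of finite partial sums
   (indexed by finite subsets of Z ordered by inclusion) converges to x. *)
Definition unit_unconditional_basis (K : numFieldType) (X : tvsType K)
    (coord : int -> {linear X -> K^o}) (e : int -> X) : Prop :=
  (forall m n, coord m (e n) = (m == n)%:R) /\
  (forall x : X, forall U, nbhs x U ->
     exists F0 : {fset int}, forall F : {fset int}, fsubset F0 F ->
       U (\sum_(n <- F) coord n x *: e n)).

Definition is_bilateral_weighted_backward_shift (K : numFieldType)
    (X : tvsType K) (coord : int -> {linear X -> K^o}) (w : int -> K)
    (B : {linear X -> X}) : Prop :=
  continuous B /\ forall (x : X) (n : int), coord n (B x) = w (n + 1) * coord (n + 1) x.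

Definition hypercyclic (K : numFieldType) (X : tvsType K) (T : X -> X) : Prop :=
  exists x : X, dense (range (fun n : nat => iter n T x)).

Definition corollary3p2_stmt (R : realType) (K : numFieldType) : Prop :=
  forall (X : tvsType K) (coord : int -> {linear X -> K^o}) (e : int -> X)
         (w : int -> K) (B : {linear X -> X}),
    frechet_sequence_space R coord ->
    unit_unconditional_basis coord e ->
    (forall n, w n != 0) ->
    is_bilateral_weighted_backward_shift coord w B ->
    (exists (x y : X), y != 0 /\
       forall U, nbhs y U -> forall N : nat, exists n : nat, (N <= n)%N /\ U (iter n B x)) ->
    hypercyclic B.

From mathcomp Require Import all_boot all_order all_algebra.
From mathcomp Require Import all_classical all_reals all_analysis.
From mathcomp Require Import finmap.
From mathcomp.real_closed Require Import complex.
From mathcomp Require Import lra zify.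
Import Order.TTheory GRing.Theory Num.Theory.
Local Open Scope classical_set_scope.
Local Open Scope ring_scope.
Import numFieldNormedType.Exports.

(* Since the e_n form an unconditional basis, the coordinate projections
   z |-> z_q e_q are equicontinuous (a Baire category argument) and tend to 0
   along every fixed vector.  If y = lim B^(n_k) x with y_j <> 0, comparing
   components of orbit points near y yields, for every J >= j, an m for which
   both e_(J+m) / (w_(J+1) ... w_(J+m)) and B^m e_J are as close to 0 as we
   like.  A polynomial in B maps e_J to any finite sum
   sum_(q <= J) a_q e_q and commutes with B, so B is topologically transitive,
   and Birkhoff's transitivity theorem in the separable complete metric space X
   provides a dense orbit. *)

Lemma exists_natSinv_lt [R : realType] [eps : R] : 0 < eps ->
  exists k : nat, k.+1%:R^-1 < eps.
Proof.
move=> eps0; exists (Num.truncn eps^-1).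
by rewrite invf_plt ?posrE // truncnS_gt.
Qed.

Lemma iter_continuous [T : topologicalType] [f : T -> T] (n : nat) :
  continuous f -> continuous (iter n f).
Proof.
move=> f_cont; elim: n => [|n IH] x //=.
exact: continuous_comp (IH x) (f_cont _).
Qed.

Lemma seq_int_ub (s : seq int) (j : int) :
  exists2 J, j <= J & forall q, q \in s -> q <= J.
Proof.
elim: s => [|a s [J jJ sJ]]; first by exists j.
exists (Num.max a J) => [|q]; first by rewrite le_max jJ orbT.
by rewrite inE le_max => /orP [/eqP ->|/sJ ->]; rewrite ?lexx ?orbT.
Qed.

Lemma fset_int_abs_bound (F : {fset int}) :
  exists N : nat, forall q, (N <= absz q)%N -> q \notin F.
Proof.
exists (\max_(i <- F) absz i).+1 => q Nq; apply/negP => qF.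
by have := leq_trans Nq (@leq_bigmax_seq _ (F : seq int) xpredT absz q qF isT); rewrite ltnn.
Qed.

Section TranslationInvariantMetric.
Variables (R : realType) (K : numFieldType) (X : tvsType K) (d : X -> X -> R).
Hypothesis d_eq0 : forall x y, d x y = 0 <-> x = y.
Hypothesis dC : forall x y, d x y = d y x.
Hypothesis d_triangle : forall x y z, d x z <= d x y + d y z.
Hypothesis dDr : forall x y z, d (x + z) (y + z) = d x y.
Hypothesis nbhs_dist : forall (x : X) (U : set X),
  nbhs x U <-> exists2 e : R, 0 < e & [set y | d x y < e] `<=` U.

Definition dball (x : X) (r : R) : set X := [set y | d x y < r].

Definition ddense (O : set X) : Prop :=
  forall z rho, 0 < rho -> exists2 y, d z y < rho & O y.

Lemma dxx x : d x x = 0.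
Proof. exact/d_eq0. Qed.

Lemma d_subr x y : d x y = d (x - y) 0.
Proof. by rewrite -(dDr x y (- y)) subrr. Qed.

Lemma dD a1 a2 b1 b2 : d (a1 + a2) (b1 + b2) <= d a1 b1 + d a2 b2.
Proof.
apply: le_trans (d_triangle _ (b1 + a2) _) _.
by rewrite dDr [b1 + a2]addrC [b1 + b2]addrC dDr.
Qed.

Lemma dD0 a b : d (a + b) 0 <= d a 0 + d b 0.
Proof. by have := dD a b 0 0; rewrite addr0. Qed.

Lemma dball_nbhs (x : X) {r : R} : 0 < r -> nbhs x (dball x r).
Proof. by move=> r0; apply/nbhs_dist; exists r. Qed.

Lemma continuous_dist [f : X -> X] [x : X] {eps : R} :
  {for x, continuous f} -> 0 < eps ->
  exists2 del, 0 < del & forall y, d x y < del -> d (f x) (f y) < eps.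
Proof.
move=> f_cont /(dball_nbhs (f x)) /f_cont.
by rewrite /= nbhs_filterE => /nbhs_dist [del del0 near]; exists del.
Qed.

Lemma continuous_distK [f : X -> K^o] [x : X] {eps : K} :
  {for x, continuous f} -> 0 < eps ->
  exists2 del, 0 < del & forall y, d x y < del -> `|f x - f y| < eps.
Proof.
move=> f_cont /(nbhsx_ballx (f x)) /f_cont.
by rewrite /= nbhs_filterE => /nbhs_dist [del del0 near]; exists del.
Qed.

Lemma scale_dist_near (t0 : K) (v : X) {eps : R} : 0 < eps ->
  exists2 th : K, 0 < th & exists2 rho, 0 < rho &
    forall t u, `|t0 - t| < th -> d v u < rho -> d (t0 *: v) (t *: u) < eps.
Proof.
move=> /(dball_nbhs (t0 *: v)) /(scale_continuous (t0, v)).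
move=> [[A1 A2] [/= /nbhs_ballP [th th0 thA] /nbhs_dist [rho rho0 rhoA]] A_near].
exists th => //; exists rho => // t u tt0 uv.
by apply: (A_near (t, u)); split; [apply: thA | apply: rhoA].
Qed.

Lemma scaler_dist0 (l : K) {eps : R} : 0 < eps ->
  exists2 del, 0 < del & forall u, d u 0 < del -> d (l *: u) 0 < eps.
Proof.
move=> /(scale_dist_near l 0) [th th0 [rho rho0 near]].
exists rho => // u u0; rewrite dC -(scaler0 _ l).
by apply: near; rewrite ?subrr ?normr0 // dC.
Qed.

Lemma scaler_dist (l : K) (z : X) {eps : R} : 0 < eps ->
  exists2 del, 0 < del & forall u, d z u < del -> d (l *: z) (l *: u) < eps.
Proof.
move=> /(scaler_dist0 l) [del del0 near]; exists del => // u zu.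
by rewrite d_subr -scalerBr; apply: near; rewrite -d_subr.
Qed.

Lemma scalel_dist (v : X) (t0 : K) {eps : R} : 0 < eps ->
  exists2 th : K, 0 < th & forall t, `|t0 - t| < th -> d (t0 *: v) (t *: v) < eps.
Proof.
move=> /(scale_dist_near t0 v) [th th0 [rho rho0 near]].
by exists th => // t tt0; apply: near; rewrite // dxx.
Qed.

Lemma scale_dist_bounded (M : K) {eps : R} : 0 < eps ->
  exists2 del, 0 < del & forall t u, `|t| <= M -> d u 0 < del -> d (t *: u) 0 < eps.
Proof.
move=> /(scale_dist_near 0 0) [th th0 [rho rho0 near]].
pose l := (`|M| + 1) / th.
have l0 : 0 < l by rewrite divr_gt0 // ltr_wpDl.
have [del del0 l_near] := scaler_dist0 l rho0.
exists del => // t u tM u0.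
have -> : t *: u = (t / l) *: (l *: u) by rewrite scalerA mulfVK // gt_eqF.
rewrite dC -(scaler0 _ 0); apply: near; last by rewrite dC l_near.
rewrite sub0r normrN normf_div (gtr0_norm l0) ltr_pdivrMr // /l mulrCA.
rewrite divff ?gt_eqF // mulr1 (ger0_norm (le_trans (normr_ge0 t) tM)).
by rewrite (le_lt_trans tM) // ltrDl.
Qed.

Definition cont0 (L : X -> X) : Prop :=
  forall eps, 0 < eps -> exists2 del, 0 < del & forall u, d u 0 < del -> d (L u) 0 < eps.

Lemma cont0_linear [L : {linear X -> X}] : {for 0, continuous L} -> cont0 L.
Proof.
move=> L_cont eps /(continuous_dist L_cont) [del del0 near].
by exists del => // u u0; rewrite dC -(linear0 L) near // dC.
Qed.

Lemma cont0_comp L1 L2 : cont0 L1 -> cont0 L2 -> cont0 (L1 \o L2).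
Proof.
move=> L1_cont L2_cont eps /L1_cont [del1 del10 near1].
by have [del2 del20 near2] := L2_cont _ del10; exists del2 => // u /near2 /near1.
Qed.

Lemma cont0Z (l : K) L : cont0 L -> cont0 (fun u => l *: L u).
Proof. by move=> L_cont; apply: (@cont0_comp ( *:%R l) L) => // eps; apply: scaler_dist0. Qed.

Lemma cont0_sum {I : Type} (s : seq I) (L : I -> X -> X) :
  (forall i, cont0 (L i)) -> cont0 (fun u => \sum_(i <- s) L i u).
Proof.
move=> L_cont; elim: s => [|i s IH] eps eps0.
  by exists 1 => // u _; rewrite big_nil dxx.
have eps20 : 0 < eps / 2 by rewrite divr_gt0.
have [del1 del10 near1] := L_cont i _ eps20; have [del2 del20 near2] := IH _ eps20.
exists (Num.min del1 del2) => [|u]; first by rewrite lt_min del10 del20.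
rewrite lt_min big_cons => /andP [u1 u2]; apply: le_lt_trans (dD0 _ _) _.
by rewrite [eps]splitr ltrD ?near1 ?near2.
Qed.

Hypothesis d_complete : forall u : nat -> X,
  (forall e : R, 0 < e -> exists N, forall m n, (N <= m)%N -> (N <= n)%N ->
     d (u m) (u n) < e) ->
  exists l : X, forall e : R, 0 < e -> exists N, forall n, (N <= n)%N -> d (u n) l < e.

Lemma nested_dballs_limit (z : nat -> X) (r : nat -> R) :
  (forall k, 0 < r k) -> (forall k, r k.+1 <= r k / 4) ->
  (forall k, d (z k) (z k.+1) < r k / 4) ->
  exists zeta, forall k, d (z k) zeta < r k.
Proof.
move=> r_gt0 r_shrink z_step.
have r_small k : r k * k.+1%:R <= r 0%N.
  elim: k => [|k IH]; first by rewrite mulr1.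
  have := r_shrink k; have := r_gt0 k; have := r_gt0 k.+1.
  rewrite -[k.+2]addn1 -[k.+1]addn1 !natrD in IH *.
  have : 0 <= k%:R :> R by []; nra.
have z_near i k : d (z k) (z (k + i)%N) < r k / 2.
  elim: i k => [|i IH] k; first by rewrite addn0 dxx divr_gt0.
  apply: le_lt_trans (d_triangle _ (z k.+1) _) _; rewrite addnS -addSn.
  have := IH k.+1; have := z_step k; have := r_shrink k; have := r_gt0 k; lra.
have [zeta z_cvg] : exists zeta, forall e, 0 < e ->
    exists N, forall n, (N <= n)%N -> d (z n) zeta < e.
  apply: d_complete => eps eps0.
  have [k k_lt] := exists_natSinv_lt (divr_gt0 eps0 (r_gt0 0%N)).
  exists k => m n km kn; apply: le_lt_trans (d_triangle _ (z k) _) _.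
  rewrite dC -(subnKC km) -(subnKC kn).
  have rk_lt : r k < eps.
    rewrite -(ltr_pM2r (ltr0Sn R k)); apply: le_lt_trans (r_small k) _.
    by rewrite -ltr_pdivrMl ?r_gt0 // mulrC -ltf_pV2 ?posrE ?divr_gt0 ?invf_div.
  have := z_near (m - k)%N k; have := z_near (n - k)%N k; lra.
exists zeta => k.
have [N N_near] := z_cvg _ (divr_gt0 (r_gt0 k) (ltr0Sn R 1)).
apply: le_lt_trans (d_triangle _ (z (maxn N k)) _) _.
have := N_near _ (leq_maxl N k); have := z_near (maxn N k - k)%N k.
rewrite subnKC ?leq_maxr //; lra.
Qed.

Lemma baire {O : nat -> set X} :
  (forall k, open (O k)) -> (forall k, ddense (O k)) -> exists zeta, forall k, O k zeta.
Proof.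
move=> O_open O_dense.
pose next_ball k (p q : X * R) := [/\ 0 < q.2, q.2 <= p.2 / 4, d p.1 q.1 < p.2 / 4
  & dball q.1 q.2 `<=` O k].
have /choice [next nextP] : forall kp : nat * (X * R),
    exists q, 0 < kp.2.2 -> next_ball kp.1 kp.2 q.
  move=> [k [z rho]] /=; have [rho0|] := ltP 0 rho; last first.
    by exists (z, rho).
  have [y zy Oy] := O_dense k z _ (divr_gt0 rho0 (ltr0Sn R 3)).
  have /nbhs_dist [r r0 yO] : nbhs y (O k) by apply: open_nbhs_nbhs.
  exists (y, Num.min r (rho / 4)) => _; split => //=.
  - by rewrite lt_min r0 divr_gt0.
  - by rewrite ge_min lexx orbT.
  - by move=> u; rewrite /dball /= lt_min => /andP [/yO].
pose p := fix p k := if k is k'.+1 then next (k', p k') else (0, 1) : X * R.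
have p_gt0 k : 0 < (p k).2.
  by elim: k => [|k IH]; [exact: ltr01 | have [] := nextP (k, p k) IH].
have pP k : next_ball k (p k) (p k.+1) := nextP (k, p k) (p_gt0 k).
have [zeta zeta_in] := @nested_dballs_limit (fun k => (p k).1) (fun k => (p k).2) p_gt0
  (fun k => let: And4 _ r_le _ _ := pP k in r_le) (fun k => let: And4 _ _ z_lt _ := pP k in z_lt).
by exists zeta => k; have [_ _ _] := pP k; apply; apply: zeta_in.
Qed.

Lemma baire_cover {A : nat -> set X} :
  (forall k, open (~` A k)) -> (forall z, exists k, A k z) ->
  exists k z rho, 0 < rho /\ dball z rho `<=` A k.
Proof.
move=> A_closed A_cover; apply: contrapT => no_interior.
have [zeta zeta_out] : exists zeta, forall k, (~` A k) zeta.
  apply: baire => // k z rho rho0; apply: contrapT => z_int.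
  apply: no_interior; exists k, z, rho; split => // y zy.
  by apply: contrapT => Ay; apply: z_int; exists y.
by have [k] := A_cover zeta; apply: zeta_out.
Qed.

Lemma birkhoff_transitivity {T : X -> X} {D : nat -> X} : continuous T ->
  (forall z eps, 0 < eps -> exists a, d z (D a) < eps) ->
  (forall u v eps, 0 < eps -> exists m z, d u z < eps /\ d v (iter m T z) < eps) ->
  exists zeta, dense (range (fun n : nat => iter n T zeta)).
Proof.
move=> T_cont D_dense T_trans.
(* [k] codes the pair [(a, b)]; codes that decode to nothing repeat [(0, 0)]. *)
pose O k := let: (a, b) := odflt (0, 0)%N (choice.unpickle k) in
  [set z | exists m, d (D a) (iter m T z) < b.+1%:R^-1].
have O_open k : open (O k).
  rewrite /O openE; case: (odflt _ _) => a b z [m zm]; apply/nbhs_dist.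
  have gap : 0 < b.+1%:R^-1 - d (D a) (iter m T z) by rewrite subr_gt0.
  have [del del0 near] := continuous_dist (iter_continuous m T_cont z) gap.
  exists del => // u /near zu; exists m.
  by apply: le_lt_trans (d_triangle _ (iter m T z) _) _; rewrite -ltrBrDl.
have O_dense k : ddense (O k).
  rewrite /O; case: (odflt _ _) => a b z rho rho0.
  have min0 : 0 < Num.min rho b.+1%:R^-1 by rewrite lt_min rho0 invr_gt0 ltr0Sn.
  have [m [u []]] := T_trans z (D a) _ min0; rewrite !lt_min => /andP [zu _] /andP [_ Du].
  by exists u => //; exists m.
have [zeta zeta_O] := baire O_open O_dense.
exists zeta => U [z Uz] U_open.
have /nbhs_dist [eps eps0 zU] : nbhs z U by apply: open_nbhs_nbhs.
have eps2 : 0 < eps / 2 by rewrite divr_gt0.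
have [a za] := D_dense z _ eps2.
have [b b_lt] := exists_natSinv_lt eps2.
have := zeta_O (choice.pickle (a, b)); rewrite /O choice.pickleK /= => -[m Dm].
exists (iter m T zeta); split; last by exists m.
apply: zU; apply: le_lt_trans (d_triangle _ (D a) _) _.
by have := lt_trans Dm b_lt; move: za; lra.
Qed.

Hypothesis K_arch : forall th : K, 0 < th -> exists N : nat, N.+1%:R^-1 < th.

Lemma small_multiples {I : eqType} (s : seq I) (v : I -> X) {eta : R} : 0 < eta ->
  exists N, forall i, i \in s -> forall n, (N <= n)%N -> d (n.+1%:R^-1 *: v i) 0 < eta.
Proof.
move=> eta0; elim: s => [|i s [N sN]]; first by exists 0%N.
have [th th0 near] := scalel_dist (v i) 0 eta0.
have [Ni Ni_lt] := K_arch _ th0.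
exists (maxn N Ni) => i'; rewrite inE => /orP [/eqP ->|i's] n; rewrite geq_max => /andP [Nn Nin].
  rewrite dC -[X in d X _](scale0r (v i)); apply: near.
  rewrite sub0r normrN ger0_norm ?invr_ge0 ?ler0n //; apply: le_lt_trans Ni_lt.
  by rewrite lef_pV2 ?posrE ?ltr0Sn // ler_nat ltnS.
exact: sN.
Qed.

Section WeightedShift.
Variables (coord : int -> {linear X -> K^o}) (e : int -> X) (w : int -> K).
Variable B : {linear X -> X}.
Hypothesis coord_inj : forall x y : X, (forall n, coord n x = coord n y) -> x = y.
Hypothesis coord_cont : forall n, continuous (coord n).
Hypothesis coord_e : forall m n, coord m (e n) = (m == n)%:R.
Hypothesis e_basis : forall (x : X) U, nbhs x U ->
  exists F0 : {fset int}, forall F : {fset int}, fsubset F0 F ->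
    U (\sum_(n <- F) coord n x *: e n).
Hypothesis w_neq0 : forall n, w n != 0.
Hypothesis B_cont : continuous B.
Hypothesis coord_B : forall (x : X) (n : int), coord n (B x) = w (n + 1) * coord (n + 1) x.

Definition component (q : int) (z : X) : X := coord q z *: e q.

Lemma coord_component p q z :
  coord p (component q z) = if p == q then coord q z else 0.
Proof.
rewrite linearZ /= coord_e /GRing.scale /=.
by case: eqP => _; rewrite ?mulr1 ?mulr0.
Qed.

Lemma componentD q a b : component q (a + b) = component q a + component q b.
Proof. by rewrite /component linearD scalerDl. Qed.

Lemma componentZ q (c : K) a : component q (c *: a) = c *: component q a.
Proof. by rewrite /component linearZ scalerA. Qed.

Lemma componentB q a b : component q (a - b) = component q a - component q b.
Proof. by rewrite /component linearB scalerBl. Qed.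

Fixpoint wprod (q : int) (r : nat) : K :=
  if r is r'.+1 then w (q + 1) * wprod (q + 1) r' else 1.

Lemma wprod_neq0 q r : wprod q r != 0.
Proof. by elim: r q => [|r IH] q /=; rewrite ?oner_neq0 // mulf_neq0. Qed.

Lemma coord_iterB r q z : coord q (iter r B z) = wprod q r * coord (q + r%:Z) z.
Proof.
elim: r q => [|r IH] q /=; first by rewrite addr0 mul1r.
by rewrite coord_B IH mulrA -addrA -intS.
Qed.

Lemma iterBD r a b : iter r B (a + b) = iter r B a + iter r B b.
Proof. by elim: r => //= r ->; rewrite linearD. Qed.

Lemma iterBZ r (c : K) a : iter r B (c *: a) = c *: iter r B a.
Proof. by elim: r => //= r ->; rewrite linearZ. Qed.

Lemma iterB0 r : iter r B 0 = 0.
Proof. by elim: r => //= r ->; rewrite linear0. Qed.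

Lemma iterB_component r q z : iter r B (component (q + r%:Z) z) = component q (iter r B z).
Proof.
apply: coord_inj => p; rewrite coord_iterB !coord_component (inj_eq (addIr _)).
by case: eqP => [->|_]; rewrite ?coord_iterB ?mulr0.
Qed.

Lemma iterB_e r q : iter r B (e (q + r%:Z)) = wprod q r *: e q.
Proof.
apply: coord_inj => p; rewrite coord_iterB linearZ /= !coord_e (inj_eq (addIr _)).
by case: eqP => [->|_]; rewrite /GRing.scale /= ?mulr0 ?mulr1.
Qed.

Lemma cont0_iterB r : cont0 (iter r B).
Proof.
elim: r => [|r IH] /=; first by move=> eps eps0; exists eps.
exact: (@cont0_comp B (iter r B) (cont0_linear (B_cont 0)) IH).
Qed.

Lemma component_approx (z : X) {eps : R} : 0 < eps ->
  exists F : {fset int}, d z (\sum_(q <- F) component q z) < eps.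
Proof.
move=> /(dball_nbhs z) /e_basis [F0 F0P].
by exists F0; apply: F0P (fsubset_refl _).
Qed.

Lemma component_tail (z : X) {eps : R} : 0 < eps ->
  exists F : {fset int}, forall q, q \notin F -> d (component q z) 0 < eps.
Proof.
move=> eps0; have eps2 : 0 < eps / 2 by rewrite divr_gt0.
have /e_basis [F0 F0P] := dball_nbhs z eps2.
exists F0 => q qF0; have := F0P _ (fsubsetU1 q F0); rewrite /= big_fsetU1 //=.
move=> near_q; rewrite -(dDr _ _ (\sum_(n <- F0) coord n z *: e n)) add0r.
apply: le_lt_trans (d_triangle _ z _) _.
rewrite [eps]splitr ltrD //; first by rewrite dC.
exact: F0P (fsubset_refl _).
Qed.

Lemma component_dist q (z : X) {eps : R} : 0 < eps ->
  exists2 del, 0 < del & forall u, d z u < del -> d (component q z) (component q u) < eps.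
Proof.
move=> /(scalel_dist (e q) (coord q z)) [th th0 near].
have [del del0 coord_near] := continuous_distK (coord_cont q z) th0.
by exists del => // u /coord_near /near.
Qed.

Lemma components_absorbed (z : X) {eta : R} : 0 < eta ->
  exists N : nat, forall q, d (component q (N.+1%:R^-1 *: z)) 0 < eta.
Proof.
move=> eta0; have [del del0 bounded] := scale_dist_bounded 1 eta0.
have [F F_tail] := component_tail z del0.
have [N N_small] := small_multiples (F : seq int) (component^~ z) eta0.
exists N => q; rewrite componentZ; case: (boolP (q \in F)) => qF.
  exact: N_small.
apply: bounded (F_tail q qF).
by rewrite ger0_norm ?invr_ge0 ?ler0n // invf_le1 ?ltr0Sn // ler1n.
Qed.

Lemma components_equicontinuous {eps : R} : 0 < eps ->
  exists2 rho, 0 < rho & forall u q, d u 0 < rho -> d (component q u) 0 < eps.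
Proof.
move=> eps0; pose eta := eps / 3; have eta0 : 0 < eta by rewrite divr_gt0.
(* Banach-Steinhaus: the closed sets [A N] cover X, so one of them contains a
   ball, whose differences fill a neighbourhood of 0. *)
pose A N := [set z | forall q, d (component q (N.+1%:R^-1 *: z)) 0 <= eta].
have A_closed N : open (~` A N).
  rewrite openE => z /existsNP [q /negP]; rewrite -ltNge => q_big; apply/nbhs_dist.
  have gap : 0 < d (component q (N.+1%:R^-1 *: z)) 0 - eta by rewrite subr_gt0.
  have [del1 del10 near1] := component_dist q (N.+1%:R^-1 *: z) gap.
  have [del del0 near] := scaler_dist N.+1%:R^-1 z del10.
  exists del => // u /near /near1 zu Au; have := Au q.
  have := d_triangle (component q (N.+1%:R^-1 *: z)) (component q (N.+1%:R^-1 *: u)) 0.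
  by move: zu; lra.
have A_cover z : exists N, A N z.
  by have [N N_small] := components_absorbed z eta0; exists N => q; apply/ltW.
have [N [z0 [rho [rho0 z0_in]]]] := baire_cover A_closed A_cover.
have [del del0 near] := scaler_dist0 N.+1%:R rho0.
exists del => // u q /near u_small.
have A1 : A N (z0 + N.+1%:R *: u).
  by apply: z0_in; rewrite /dball /= dC addrC -{2}[z0]add0r dDr.
have A0 : A N z0 by apply: z0_in; rewrite /dball /= dxx.
have -> : u = N.+1%:R^-1 *: (z0 + N.+1%:R *: u) - N.+1%:R^-1 *: z0.
  by rewrite scalerDr scalerA mulVf ?pnatr_eq0 // scale1r addrAC subrr add0r.
rewrite componentB -d_subr; apply: le_lt_trans (d_triangle _ 0 _) _.
by have := A1 q; have := A0 q; rewrite (dC 0) /eta; lra.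
Qed.

Lemma components_near (y : X) {eps : R} : 0 < eps ->
  exists N : nat, exists2 rho, 0 < rho &
    forall z q, d y z < rho -> (N <= absz q)%N -> d (component q z) 0 < eps.
Proof.
move=> eps0; have eps2 : 0 < eps / 2 by rewrite divr_gt0.
have [F F_tail] := component_tail y eps2.
have [N N_out] := fset_int_abs_bound F.
have [rho rho0 equi] := components_equicontinuous eps2.
exists N, rho => // z q yz Nq.
rewrite -(subrK y z) componentD; apply: le_lt_trans (dD0 _ _) _.
by rewrite [eps]splitr ltrD ?F_tail ?N_out // equi // -d_subr dC.
Qed.

Variable f : nat -> K.
Hypothesis f_dense : forall t th : K, 0 < th -> exists b, `|t - f b| < th.

Lemma exists_dense_seq :
  exists D : nat -> X, forall z eps, 0 < eps -> exists a, d z (D a) < eps.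
Proof.
pose D a := if @choice.unpickle (seq (int * nat)) a is Some s
  then \sum_(p <- s) f p.2 *: e p.1 else 0.
exists D => z eps eps0; have eps2 : 0 < eps / 2 by rewrite divr_gt0.
have [F zF] := component_approx z eps2.
have approx_sum (l : seq int) eta : 0 < eta -> exists s : seq (int * nat),
    d (\sum_(q <- l) component q z) (\sum_(p <- s) f p.2 *: e p.1) < eta.
  elim: l eta => [|q l IH] eta eta0; first by exists [::]; rewrite !big_nil dxx.
  have eta2 : 0 < eta / 2 by rewrite divr_gt0.
  have [s ls] := IH _ eta2.
  have [th th0 near] := scalel_dist (e q) (coord q z) eta2.
  have [b qb] := f_dense (coord q z) _ th0.
  exists ((q, b) :: s); rewrite !big_cons /=; apply: le_lt_trans (dD _ _ _ _) _.
  by rewrite [eta]splitr ltrD // near.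
have [s Fs] := approx_sum F _ eps2.
exists (choice.pickle s); rewrite /D choice.pickleK.
apply: le_lt_trans (d_triangle _ (\sum_(q <- F) component q z) _) _.
by rewrite [eps]splitr ltrD.
Qed.

Definition transfer (F : seq int) (a : X) (J : int) (v : X) : X :=
  \sum_(q <- F) (coord q a / wprod q (absz (J - q))) *: iter (absz (J - q)) B v.

Lemma transfer_e F a J : (forall q, q \in F -> q <= J) ->
  transfer F a J (e J) = \sum_(q <- F) component q a.
Proof.
move=> FJ; rewrite /transfer !big_seq; apply: eq_bigr => q /FJ qJ.
have -> : e J = e (q + (absz (J - q))%:Z) by congr e; lia.
by rewrite iterB_e scalerA mulfVK ?wprod_neq0.
Qed.

Lemma transfer_iterB F a J m v : iter m B (transfer F a J v) = transfer F a J (iter m B v).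
Proof.
rewrite /transfer (big_morph (iter m B) (iterBD m) (iterB0 m)); apply: eq_bigr => q _.
by rewrite iterBZ -!iterD addnC.
Qed.

Lemma cont0_transfer F a J : cont0 (transfer F a J).
Proof.
exact: (cont0_sum F (fun q u => (coord q a / wprod q (absz (J - q))) *: iter (absz (J - q)) B u)
  (fun q => cont0Z _ _ (cont0_iterB _))).
Qed.

Lemma wprod_inv_e_component J m v : coord J (iter m B v) != 0 ->
  (wprod J m)^-1 *: e (J + m%:Z) = (coord J (iter m B v))^-1 *: component (J + m%:Z) v.
Proof.
rewrite coord_iterB => wc_neq0.
have c_neq0 : coord (J + m%:Z) v != 0 by apply: contraNneq wc_neq0 => ->; rewrite mulr0.
by rewrite /component scalerA invfM -mulrA mulVf ?mulr1.
Qed.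

Lemma iterB_e_component J m u : coord J u != 0 ->
  iter m B (e J) = (coord J u)^-1 *: component (J - m%:Z) (iter m B u).
Proof.
move=> cu; rewrite -iterB_component subrK -iterBZ /component scalerA.
by rewrite mulVf ?scale1r.
Qed.

Section LimitPoint.
Variables (x y : X) (j : int).
Hypothesis yj_neq0 : coord j y != 0.
Hypothesis y_limit : forall U, nbhs y U -> forall N : nat,
  exists n : nat, (N <= n)%N /\ U (iter n B x).

Lemma orbit_near (N : nat) {rho : R} : 0 < rho ->
  exists n, (N <= n)%N /\ d y (iter n B x) < rho.
Proof. by move=> /(dball_nbhs y) /y_limit; apply. Qed.

Lemma orbit_coord_inv_bound r : exists M, exists2 rho, 0 < rho &
  forall v, d y (iter r B v) < rho ->
    coord (j + r%:Z) v != 0 /\ `|(coord (j + r%:Z) v)^-1| <= M.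
Proof.
have yj2 : 0 < `|coord j y| / 2 by rewrite divr_gt0 ?normr_gt0.
have [rho rho0 near] := continuous_distK (coord_cont j y) yj2.
exists (`|wprod j r| / (`|coord j y| / 2)), rho => // v /near.
rewrite coord_iterB; set c := coord _ v; set k := wprod j r => close.
have kc_big : `|coord j y| / 2 < `|k * c|.
  have := ler_distD (k * c) (coord j y) 0; rewrite !subr0 => tri.
  rewrite -(ltrD2l (`|coord j y| / 2)) -splitr; apply: le_lt_trans tri _.
  by rewrite ltrD2r.
have c_neq0 : c != 0.
  by apply: contraTneq kc_big => ->; rewrite mulr0 normr0 (lt_gtF yj2).
split => //; rewrite normfV.
have -> : `|c|^-1 = `|k| / `|k * c|.
  by rewrite normrM invfM mulrA divff ?mul1r // normr_eq0 wprod_neq0.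
by rewrite ler_wpM2l // lef_pV2 ?posrE ?ltW // (lt_trans yj2).
Qed.

Lemma weighted_units_small {J : int} {del : R} : j <= J -> 0 < del ->
  exists m : nat, d ((wprod J m)^-1 *: e (J + m%:Z)) 0 < del /\ d (iter m B (e J)) 0 < del.
Proof.
(* Both vectors are bounded multiples of far-out components of orbit points:
   the first of the (J+m)-th component of the fixed vector B^p x, the second
   of the (J-m)-th component of B^n x, which is close to y. *)
move=> jJ del0; pose r := absz (J - j).
have -> : J = j + r%:Z by rewrite /r; lia.
set J' := j + r%:Z.
have [M [rho0 rho0_gt0 inv_bound]] := orbit_coord_inv_bound r.
have [del1 del1_gt0 scale_small] := scale_dist_bounded M del0.
have [N1 [rho1 rho1_gt0 near1]] := components_near y del1_gt0.
have [q0 [q0_ge y_q0]] := orbit_near (2 * r) rho0_gt0.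
pose p := (q0 - 2 * r)%N.
have [N2 [rho2 rho2_gt0 near2]] := components_near (iter p B x) del1_gt0.
have rho_gt0 : 0 < Num.min rho0 rho1 by rewrite lt_min rho0_gt0 rho1_gt0.
have [n [n_ge]] := orbit_near (q0 + N1 + N2 + absz J') rho_gt0.
rewrite lt_min => /andP [y_n0 y_n1].
exists (n - q0 + r)%N; set m := (n - q0 + r)%N.
have [rn rq0] : (r <= n)%N /\ (r <= q0)%N by clear -n_ge q0_ge; lia.
have [mp mq0 N2m N1m] : [/\ (m + p = n - r)%N, (m + (q0 - r) = n)%N,
    (N2 <= absz (J' + m%:Z)%R)%N & (N1 <= absz (J' - m%:Z)%R)%N].
  by rewrite /m /p; clear -n_ge q0_ge; split; lia.
split.
- have [c_neq0 c_le] : coord J' (iter (n - r) B x) != 0 /\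
      `|(coord J' (iter (n - r) B x))^-1| <= M.
    by apply: inv_bound; rewrite -iterD subnKC.
  rewrite (wprod_inv_e_component J' m (iter p B x)) -iterD mp //.
  by apply: scale_small => //; apply: near2; rewrite ?dxx.
- have [c_neq0 c_le] : coord J' (iter (q0 - r) B x) != 0 /\
      `|(coord J' (iter (q0 - r) B x))^-1| <= M.
    by apply: inv_bound; rewrite -iterD subnKC.
  rewrite (iterB_e_component _ m _ c_neq0) -iterD mq0.
  by apply: scale_small => //; apply: near1.
Qed.

Lemma shift_transitive_sums (F G : seq int) (a b : X) {eps : R} : 0 < eps ->
  exists m z, d (\sum_(q <- F) component q a) z < eps /\
              d (\sum_(q <- G) component q b) (iter m B z) < eps.
Proof.
move=> eps0; have [J jJ FGJ] := seq_int_ub (F ++ G) j.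
have FJ q : q \in F -> q <= J by move=> qF; apply: FGJ; rewrite mem_cat qF.
have GJ q : q \in G -> q <= J by move=> qG; apply: FGJ; rewrite mem_cat qG orbT.
have [delF delF0 smallF] := cont0_transfer F a J _ eps0.
have [delG delG0 smallG] := cont0_transfer G b J _ eps0.
have del0 : 0 < Num.min delF delG by rewrite lt_min delF0 delG0.
have [m []] := weighted_units_small jJ del0.
rewrite !lt_min => /andP [_ s_small] /andP [Be_small _].
set s := _ *: e _ in s_small.
have Bs : iter m B s = e J by rewrite /s iterBZ iterB_e scalerA mulVf ?wprod_neq0 ?scale1r.
(* B^m s = e_J, so B^m z = transfer F a J (B^m e_J) + sum_(q <- G) b_q e_q. *)
exists m, (\sum_(q <- F) component q a + transfer G b J s); split.
  rewrite (addrC (\sum_(q <- F) _)) -{1}(add0r (\sum_(q <- F) component q a)) dDr dC.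
  exact: smallG.
rewrite iterBD transfer_iterB Bs (transfer_e _ _ _ GJ) -(transfer_e _ _ _ FJ) transfer_iterB.
by rewrite -{1}(add0r (\sum_(q <- G) component q b)) dDr dC; apply: smallF.
Qed.

Lemma shift_transitive u v {eps : R} : 0 < eps ->
  exists m z, d u z < eps /\ d v (iter m B z) < eps.
Proof.
move=> eps0; have eps2 : 0 < eps / 2 by rewrite divr_gt0.
have [F uF] := component_approx u eps2; have [G vG] := component_approx v eps2.
have [m [z [Fz Gz]]] := shift_transitive_sums F G u v eps2.
exists m, z; split.
  by apply: le_lt_trans (d_triangle _ (\sum_(q <- F) component q u) _) _; rewrite [eps]splitr ltrD.
by apply: le_lt_trans (d_triangle _ (\sum_(q <- G) component q v) _) _; rewrite [eps]splitr ltrD.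
Qed.

Lemma limit_point_hypercyclic : exists zeta, dense (range (fun n : nat => iter n B zeta)).
Proof.
have [D D_dense] := exists_dense_seq.
exact: birkhoff_transitivity B_cont D_dense shift_transitive.
Qed.

End LimitPoint.
End WeightedShift.
End TranslationInvariantMetric.

Lemma corollary3p2_stmt_of_separable (R : realType) (K : numFieldType) (f : nat -> K) :
  (forall th : K, 0 < th -> exists N : nat, N.+1%:R^-1 < th) ->
  (forall t th : K, 0 < th -> exists b, `|t - f b| < th) ->
  corollary3p2_stmt R K.
Proof.
move=> K_arch f_dense X coord e w B [[d [[_ d_eq0 dC d_tri dDr] nbhs_d d_compl]]].
move=> coord_inj coord_cont [coord_e e_basis] w_neq0 [B_cont coord_B] [x [y [y_neq0 y_lim]]].
have [j yj] : exists j, coord j y != 0.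
  apply: contrapT => no_j; move/eqP: y_neq0; apply; apply: coord_inj => n.
  by rewrite linear0; apply: contrapT => /eqP yn; apply: no_j; exists n.
exact: (limit_point_hypercyclic _ _ _ _ d_eq0 dC d_tri dDr nbhs_d d_compl K_arch _ _ _ _
  coord_inj coord_cont coord_e e_basis w_neq0 B_cont coord_B _ f_dense _ _ _ yj y_lim).
Qed.

Lemma rat_approx {R : realType} (a : R) {eps : R} : 0 < eps ->
  exists q : rat, `|a - ratr q| < eps.
Proof.
move=> eps0; have [y [ay [q _ qy]]] := @dense_rat R (ball a eps)
  (ex_intro _ a (ballxx a eps0)) (ball_open a eps).
by exists q; rewrite qy; move: ay; rewrite -ball_normE.
Qed.

Lemma corollary3p2_real (R : realType) : corollary3p2_stmt R R.
Proof.
apply: (@corollary3p2_stmt_of_separable R R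
  (fun b => if @choice.unpickle rat b is Some q then ratr q else 0)).
  by move=> th; apply: exists_natSinv_lt.
move=> t th /(rat_approx t) [q tq].
by exists (choice.pickle q); rewrite choice.pickleK.
Qed.

Local Open Scope complex_scope.

Lemma corollary3p2_complex (R : realType) : corollary3p2_stmt R R[i].
Proof.
apply: (@corollary3p2_stmt_of_separable R R[i] (fun b =>
  if @choice.unpickle (rat * rat)%type b is Some q then (ratr q.1 : R) +i* ratr q.2 else 0)).
  move=> [a b]; rewrite ltcE /= => /andP [/eqP -> /exists_natSinv_lt [N aN]].
  exists N; have -> : (N.+1%:R : R[i])^-1 = (N.+1%:R^-1 : R)%:C.
    by rewrite fmorphV rmorph_nat.
  by rewrite ltcE /= eqxx aN.
move=> [a b] [th thi]; rewrite ltcE /= => /andP [/eqP -> th0].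
have th2 : 0 < th / 2 by rewrite divr_gt0.
have [q1 aq1] := rat_approx a th2; have [q2 bq2] := rat_approx b th2.
exists (choice.pickle (q1, q2)); rewrite choice.pickleK /=.
rewrite normc_def /= -complexr0 ltcR.
rewrite -[ltRHS](@ger0_norm _ th) ?ltW // -sqrtr_sqr ltr_sqrt ?exprn_gt0 //.
move: aq1 bq2; rewrite !ltr_norml; set u := a - ratr q1; set v := b - ratr q2.
move=> /andP [u_gt u_lt] /andP [v_gt v_lt]; nra.
Qed.

Theorem corollary3p2 (R : realType) :
  corollary3p2_stmt R R /\ corollary3p2_stmt R R[i].
Proof. by split; [apply: corollary3p2_real | apply: corollary3p2_complex]. Qed.
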